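(* Assume (A) and $c_1<c_1^F$. Let $t^*>t_0$ be a minimizer of $t\mapsto\sup_{s\in(0,t)}\Upsilon(s,t)$ over $t>t_0$, and let $s^*\in(0,t^* )$ be a maximizer of $s\mapsto\Upsilon(s,t^* )$ over $(0,t^* )$. Then $k(s^*,t^* )\ge c_1s^*$.
   Context: $v:[0,\infty)\to[0,\infty)$ is continuous, $v(0)=0$, $\lim_{t\to\infty}v(t)/t^\alpha=0$ for some $\alpha<2$, and is the variance function of a centered Gaussian process $A$ on $\mathbb R$ with stationary increments and $A(0)=0$; $\Gamma(s,t):=\tfrac12(v(|s|)+v(|t|)-v(|t-s|))$. Fix $b>0$, $c_1>c_2>0$, $t_0:=b/(c_1-c_2)$. For $0<s<t$, $\Sigma(s,t):=\begin{pmatrix}v(t)&\Gamma(s,t)\\ \Gamma(s,t)&v(s)\end{pmatrix}$ (assumed nonsingular), $\Lambda_{s,t}(y,z):=\frac12(y,z)\Sigma(t-s,t)^{-1}(y,z)^\top$, $k(s,t):=\frac{\Gamma(s,t)}{v(t)}(b+c_2t)$, $\Upsilon(s,t):=\Lambda_{s,t}(b+c_2t,b+c_2t-c_1s)$ if $k(s,t)>c_1s$, else $(b+c_2t)^2/(2v(t))$. $L_c(t):=(b+ct)^2/(2v(t))$; $t^F_{c_2}$ a minimizer of $L_{c_2}$ on $(0,\infty)$; $c_1^F:=\sup_{s\in(0,t^F_{c_2})}k(s,t^F_{c_2})/s$. Assumption (A): $\sqrt v\in C^2([0,\infty))$, strictly increasing and strictly concave. *)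

From Stdlib Require Import Reals Lra.
From Coquelicot Require Import Coquelicot.
Open Scope R_scope.

Definition Gam (v : R -> R) (s t : R) : R :=
  (v (Rabs s) + v (Rabs t) - v (Rabs (t - s))) / 2.

(* Sigma(s,t) = [[v t, Gam s t],[Gam s t, v s]]; its determinant *)
Definition detSigma (v : R -> R) (s t : R) : R :=
  v t * v s - Gam v s t * Gam v s t.

(* Lambda_{s,t}(y,z) = 1/2 (y,z) Sigma(t-s,t)^{-1} (y,z)^T, with the
   explicit inverse of the symmetric 2x2 matrix [[A,B],[B,C]]:
   1/(AC-B^2) [[C,-B],[-B,A]]. *)
Definition Lambda (v : R -> R) (s t y z : R) : R :=
  let A := v t in
  let B := Gam v (t - s) t in
  let C := v (t - s) in
  (1/2) * ((C * y * y - 2 * B * y * z + A * z * z) / (A * C - B * B)).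

Definition kfun (v : R -> R) (b c2 s t : R) : R :=
  Gam v s t / v t * (b + c2 * t).

Definition Upsilon (v : R -> R) (b c1 c2 s t : R) : R :=
  if Rlt_dec (c1 * s) (kfun v b c2 s t)
  then Lambda v s t (b + c2 * t) (b + c2 * t - c1 * s)
  else (b + c2 * t) ^ 2 / (2 * v t).

Definition Lc (v : R -> R) (b c t : R) : R := (b + c * t) ^ 2 / (2 * v t).

Definition supUpsilon (v : R -> R) (b c1 c2 t : R) : Rbar :=
  Lub_Rbar (fun x => exists s, 0 < s < t /\ x = Upsilon v b c1 c2 s t).

Definition c1F (v : R -> R) (b c2 tF : R) : Rbar :=
  Lub_Rbar (fun x => exists s, 0 < s < tF /\ x = kfun v b c2 s tF / s).

Definition psd_kernel (v : R -> R) : Prop :=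
  forall (n : nat) (t a : nat -> R),
    0 <= sum_f_R0 (fun i => sum_f_R0 (fun j => a i * a j * Gam v (t i) (t j)) n) n.

(* Assumption (A): sqrt v in C^2([0,oo)) (= restriction of a C^2 function
   on R), strictly increasing and strictly concave on [0,oo). *)
Definition assumptionA (v : R -> R) : Prop :=
  (exists g : R -> R,
     (forall t, 0 <= t -> g t = sqrt (v t)) /\
     (forall x, ex_derive g x) /\
     (forall x, ex_derive (Derive g) x) /\
     (forall x, continuous (Derive (Derive g)) x)) /\
  (forall x y, 0 <= x -> x < y -> sqrt (v x) < sqrt (v y)) /\
  (forall x y l, 0 <= x -> 0 <= y -> x <> y -> 0 < l < 1 ->
     l * sqrt (v x) + (1 - l) * sqrt (v y) < sqrt (v (l * x + (1 - l) * y))).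

(* Suppose k(sstar,tstar) < c1 sstar.  Then Upsilon(sstar,tstar) = L_{c2}(tstar), and an s
   with k(s,tstar) > c1 s would give
     Upsilon(s,tstar) = L_{c2}(tstar) + (k(s,tstar) - c1 s)^2 / (2 S(s,tstar))
                      > Upsilon(sstar,tstar),
   where S(s,t) = v(s) - Gamma(s,t)^2 / v(t) is the Schur complement of Sigma; so
   k(s,tstar) <= c1 s for every s.  For t = tstar + h an s can then only become active through
   k(s,t) - k(s,tstar) = O(s |h|), while strict concavity of sqrt v keeps S(s,t) >= d s^2, so
   sup_s Upsilon(s,t) <= L_{c2}(t) + K h^2.  Minimality of tstar turns tstar into a critical
   point of L_{c2}, which is unique when sqrt v is increasing and strictly concave; hence
   tstar = tF.  But c1 < c1^F provides an s with k(s,tF) > c1 s, a contradiction. *)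

From Stdlib Require Import Reals Lra.
From Coquelicot Require Import Coquelicot.
Open Scope R_scope.

Lemma Rabs_mul_sub_le (x x' u u' : R) :
  Rabs (x * u - x' * u') <= Rabs (x - x') * Rabs u + Rabs x' * Rabs (u - u').
Proof.
  replace (x * u - x' * u') with ((x - x') * u + x' * (u - u')) by ring.
  eapply Rle_trans; [apply Rabs_triang|]. rewrite !Rabs_mult. lra.
Qed.

Lemma Rabs_div_sub_le (a a' p p' m A B C : R) : 0 < m -> m <= p -> m <= p' ->
  Rabs (a - a') <= A -> Rabs a' <= B -> Rabs (p - p') <= C ->
  Rabs (a / p - a' / p') <= A / m + B * C / (m * m).
Proof.
  intros hm hp hp' hA hB hC.
  replace (a / p - a' / p') with ((a - a') * / p + a' * (p' - p) * / (p * p'))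
    by (field; lra).
  eapply Rle_trans; [apply Rabs_triang|].
  rewrite !Rabs_mult, (Rabs_minus_sym p'), !Rabs_inv, (Rabs_pos_eq p), (Rabs_pos_eq (p * p'))
    by nra.
  apply Rplus_le_compat; apply Rmult_le_compat; try apply Rabs_pos; auto;
    try (left; apply Rinv_0_lt_compat; nra); try (apply Rinv_le_contravar; nra).
  - apply Rmult_le_pos; apply Rabs_pos.
  - apply Rmult_le_compat; auto; apply Rabs_pos.
Qed.

Lemma is_derive_ge_of_right_bound (f : R -> R) x d c r K :
  is_derive f x d -> 0 < r -> 0 <= K ->
  (forall h, 0 < h < r -> f x + c * h - K * h ^ 2 <= f (x + h)) -> c <= d.
Proof.
  intros hd hr hK hright. apply Rnot_lt_le. intro hdc.
  destruct (proj1 (is_derive_Reals f x d) hd ((c - d) / 2) ltac:(lra)) as [[delta hdelta] hlim].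
  simpl in hlim.
  assert (hK1 : K + 1 > 0) by lra.
  set (h := Rmin (delta / 2) (Rmin (r / 2) ((c - d) / 2 / (K + 1)))).
  assert (hh0 : 0 < h).
  { unfold h. repeat apply Rmin_glb_lt; try lra. apply Rdiv_lt_0_compat; lra. }
  assert (hh1 : h < delta) by (unfold h; eapply Rle_lt_trans; [apply Rmin_l|lra]).
  assert (hh2 : h < r).
  { unfold h. eapply Rle_lt_trans; [apply Rmin_r|]. eapply Rle_lt_trans; [apply Rmin_l|]. lra. }
  assert (hh3 : h * (K + 1) <= (c - d) / 2).
  { apply (Rle_div_r _ _ _ hK1). unfold h. do 2 (eapply Rle_trans; [apply Rmin_r|]). lra. }
  specialize (hright h (conj hh0 hh2)).
  assert (hhd : Rabs h < delta) by (rewrite Rabs_pos_eq; lra).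
  specialize (hlim h ltac:(lra) hhd).
  apply Rabs_def2 in hlim as [hlim _].
  set (q := (f (x + h) - f x) / h) in hlim.
  assert (hq_eq : f (x + h) - f x = q * h) by (unfold q; field; apply Rgt_not_eq; lra).
  nra.
Qed.

Definition quadratic_local_min (f : R -> R) (x : R) : Prop :=
  exists r K, 0 < r /\ 0 <= K /\ forall h, Rabs h < r -> f x <= f (x + h) + K * h ^ 2.

Lemma is_derive_quadratic_local_min (f : R -> R) x d :
  is_derive f x d -> quadratic_local_min f x -> d = 0.
Proof.
  intros hd [r [K [hr [hK hmin]]]].
  assert (hright : 0 <= d).
  { apply (is_derive_ge_of_right_bound f x d 0 r K hd hr hK).
    intros h hh. pose proof (hmin h ltac:(rewrite Rabs_pos_eq; lra)). lra. }
  assert (hleft : 0 <= - d).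
  { assert (hd' : is_derive (fun y => f (- y)) (- x) (- d)).
    { replace (- d) with (scal (-1) d) by (unfold scal; simpl; unfold mult; simpl; ring).
      apply (is_derive_comp f (fun y => - y)); [rewrite Ropp_involutive; exact hd|].
      auto_derive; auto. }
    apply (is_derive_ge_of_right_bound _ (- x) (- d) 0 r K hd' hr hK).
    intros h hh. pose proof (hmin (- h) ltac:(rewrite Rabs_Ropp, Rabs_pos_eq; lra)) as hmh.
    rewrite Ropp_plus_distr, Ropp_involutive. replace ((- h) ^ 2) with (h ^ 2) in hmh by ring.
    lra. }
  lra.
Qed.

Definition strictly_concave_Rge0 (g : R -> R) : Prop :=
  forall x y l, 0 <= x -> 0 <= y -> x <> y -> 0 < l < 1 ->
    l * g x + (1 - l) * g y < g (l * x + (1 - l) * y).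

Section ConcaveDifferentiable.

Variables g Dg : R -> R.
Hypothesis g_derive : forall x, is_derive g x (Dg x).
Hypothesis g_concave : strictly_concave_Rge0 g.

Lemma concave_tangent_le a x : 0 <= a -> 0 <= x -> g x <= g a + Dg a * (x - a).
Proof.
  intros ha hx.
  assert (hphi : is_derive (fun l => g (a + l * (x - a))) 0 (Dg a * (x - a))).
  { replace (Dg a * (x - a)) with (scal (x - a) (Dg (a + 0 * (x - a))))
      by (rewrite Rmult_0_l, Rplus_0_r; unfold scal; simpl; unfold mult; simpl; ring).
    apply (is_derive_comp g (fun l => a + l * (x - a))); [apply g_derive|].
    auto_derive; auto; ring. }
  enough (g x - g a <= Dg a * (x - a)) by lra.
  apply (is_derive_ge_of_right_bound _ 0 _ (g x - g a) 1 0 hphi); try lra.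
  intros l hl. rewrite Rplus_0_l, Rmult_0_l, Rplus_0_r.
  destruct (Req_dec x a) as [->|hxa]; [replace (a + l * (a - a)) with a by ring; lra|].
  pose proof (g_concave x a l hx ha hxa hl).
  replace (a + l * (x - a)) with (l * x + (1 - l) * a) by ring. lra.
Qed.

Lemma concave_tangent_lt a x : 0 <= a -> 0 <= x -> x <> a -> g x < g a + Dg a * (x - a).
Proof.
  intros ha hx hxa.
  pose proof (concave_tangent_le a ((a + x) / 2) ha ltac:(lra)) as htangent.
  pose proof (g_concave x a (1 / 2) hx ha hxa ltac:(lra)) as hchord.
  replace (1 / 2 * x + (1 - 1 / 2) * a) with ((a + x) / 2) in hchord by field.
  lra.
Qed.

Lemma concave_derive_decr a x : 0 <= a -> a < x -> Dg x < Dg a.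
Proof.
  intros ha hax.
  pose proof (concave_tangent_lt a x ha ltac:(lra) ltac:(lra)).
  pose proof (concave_tangent_lt x a ltac:(lra) ha ltac:(lra)).
  nra.
Qed.

Lemma concave_increment_bounds a s : 0 <= a -> 0 <= s ->
  s * Dg (a + s) <= g (a + s) - g a <= s * Dg a.
Proof.
  intros ha hs.
  pose proof (concave_tangent_le (a + s) a ltac:(lra) ha).
  pose proof (concave_tangent_le a (a + s) ha ltac:(lra)).
  split; nra.
Qed.

Hypothesis g_incr : forall x y, 0 <= x -> x < y -> g x < g y.

Lemma concave_derive_pos x : 0 <= x -> 0 < Dg x.
Proof.
  intros hx.
  pose proof (concave_tangent_le x (x + 1) hx ltac:(lra)).
  pose proof (g_incr x (x + 1) hx ltac:(lra)). nra.
Qed.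

Lemma Lc_slope_factor_incr b c a x : 0 < b -> 0 < c -> 0 <= a -> a < x ->
  c * g a - (b + c * a) * Dg a < c * g x - (b + c * x) * Dg x.
Proof.
  intros hb hc ha hax.
  pose proof (concave_tangent_lt x a ltac:(lra) ha ltac:(lra)).
  pose proof (concave_derive_decr a x ha hax).
  assert (0 < b + c * a) by nra.
  nra.
Qed.

Definition Lg (b c t : R) : R := (b + c * t) ^ 2 / (2 * (g t * g t)).

Lemma is_derive_Lg b c x : g x <> 0 ->
  is_derive (Lg b c) x ((b + c * x) / (g x ^ 3) * (c * g x - (b + c * x) * Dg x)).
Proof.
  intros hgx. unfold Lg.
  assert (ex_derive g x) by (eexists; apply g_derive).
  rewrite <- (is_derive_unique g x (Dg x) (g_derive x)).
  auto_derive; [repeat split; auto; intro; apply hgx; nra|].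
  change (Derive (fun y => g y) x) with (Derive g x). field. exact hgx.
Qed.

Hypothesis g0 : g 0 = 0.

Lemma Lg_quadratic_local_min_unique b c x y : 0 < b -> 0 < c -> 0 < x -> 0 < y ->
  quadratic_local_min (Lg b c) x -> quadratic_local_min (Lg b c) y -> x = y.
Proof.
  intros hb hc hx hy hmx hmy.
  assert (critical : forall z, 0 < z -> quadratic_local_min (Lg b c) z ->
            c * g z - (b + c * z) * Dg z = 0).
  { intros z hz hmz.
    assert (hgz : 0 < g z) by (rewrite <- g0; apply g_incr; lra).
    pose proof (is_derive_quadratic_local_min _ _ _ (is_derive_Lg b c z ltac:(lra)) hmz) as e.
    apply Rmult_integral in e as [e|e]; [|exact e].
    assert (0 < (b + c * z) / g z ^ 3) by (apply Rdiv_lt_0_compat; [nra|apply pow_lt; lra]).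
    lra. }
  pose proof (critical x hx hmx). pose proof (critical y hy hmy).
  destruct (Rtotal_order x y) as [hxy|[e|hxy]]; [|exact e|].
  - pose proof (Lc_slope_factor_incr b c x y hb hc ltac:(lra) hxy). lra.
  - pose proof (Lc_slope_factor_incr b c y x hb hc ltac:(lra) hxy). lra.
Qed.

End ConcaveDifferentiable.

Lemma continuous_bounded_segment (f : R -> R) a b : a <= b -> (forall x, continuous f x) ->
  exists M, 0 <= M /\ forall x, a <= x <= b -> Rabs (f x) <= M.
Proof.
  intros hab hc.
  destruct (continuity_ab_min (fun x => - Rabs (f x)) a b hab) as [xm [hmin _]].
  { intros c _. apply continuity_pt_opp, (continuity_pt_comp f Rabs).
    - apply continuity_pt_filterlim, hc.
    - apply Rcontinuity_abs. }
  exists (Rabs (f xm)). split; [apply Rabs_pos|].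
  intros x hx. specialize (hmin x hx). simpl in hmin. lra.
Qed.

Lemma derive_bounded_lipschitz (f df : R -> R) a b M : (forall x, is_derive f x (df x)) ->
  (forall x, a <= x <= b -> Rabs (df x) <= M) ->
  forall x y, a <= x <= b -> a <= y <= b -> Rabs (f x - f y) <= M * Rabs (x - y).
Proof.
  intros hd hM x y hx hy.
  destruct (MVT_gen f y x df) as [c [[hc1 hc2] e]].
  { intros z _. apply hd. }
  { intros z _. apply continuity_pt_filterlim, (@ex_derive_continuous R_AbsRing R_NormedModule).
    eexists; apply hd. }
  rewrite e, Rabs_mult. apply Rmult_le_compat_r; [apply Rabs_pos|].
  apply hM. split.
  - eapply Rle_trans; [|exact hc1]. apply Rmin_glb; lra.
  - eapply Rle_trans; [exact hc2|]. apply Rmax_lub; lra.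
Qed.

Lemma C1_lipschitz_segment (f df : R -> R) a b : a <= b ->
  (forall x, is_derive f x (df x)) -> (forall x, continuous df x) ->
  exists M, 0 <= M /\
    forall x y, a <= x <= b -> a <= y <= b -> Rabs (f x - f y) <= M * Rabs (x - y).
Proof.
  intros hab hd hc.
  destruct (continuous_bounded_segment df a b hab hc) as [M [hM hbound]].
  exists M. split; [exact hM|]. exact (derive_bounded_lipschitz f df a b M hd hbound).
Qed.

Lemma second_difference_lipschitz (f df : R -> R) T M :
  (forall x, is_derive f x (df x)) ->
  (forall x y, 0 <= x <= T -> 0 <= y <= T -> Rabs (df x - df y) <= M * Rabs (x - y)) ->
  forall s u1 u2, 0 <= s -> s <= u1 <= T -> s <= u2 <= T ->
    Rabs ((f u1 - f (u1 - s)) - (f u2 - f (u2 - s))) <= M * s * Rabs (u1 - u2).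
Proof.
  intros hd hlip s u1 u2 hs hu1 hu2.
  apply (derive_bounded_lipschitz (fun u => f u - f (u - s)) (fun u => df u - df (u - s)) s T);
    auto.
  - intro u. apply (@is_derive_minus R_AbsRing R_NormedModule); [apply hd|].
    replace (df (u - s)) with (scal 1 (df (u - s)))
      by (unfold scal; simpl; unfold mult; simpl; ring).
    apply (is_derive_comp f (fun u => u - s)); [apply hd|]. auto_derive; auto.
  - intros u hu. pose proof (hlip u (u - s) ltac:(lra) ltac:(lra)) as hu_lip.
    replace (u - (u - s)) with s in hu_lip by ring. rewrite (Rabs_pos_eq s) in hu_lip by lra.
    lra.
Qed.

Lemma is_derive_sq (f : R -> R) x df : is_derive f x df ->
  is_derive (fun y => f y * f y) x (2 * f x * df).
Proof.
  intro hd. replace (2 * f x * df) with (df * f x + f x * df) by ring.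
  apply (is_derive_mult f f x df df hd hd). intros; apply Rmult_comm.
Qed.

Lemma sq_C2_lipschitz_bounds (g : R -> R) T :
  (forall x, is_derive g x (Derive g x)) ->
  (forall x, is_derive (Derive g) x (Derive (Derive g) x)) ->
  (forall x, continuous (Derive (Derive g)) x) -> 0 <= T ->
  exists M1 M2, 0 <= M1 /\ 0 <= M2 /\
   (forall x y, 0 <= x <= T -> 0 <= y <= T ->
      Rabs (g x * g x - g y * g y) <= M1 * Rabs (x - y)) /\
   (forall s u1 u2, 0 <= s -> s <= u1 <= T -> s <= u2 <= T ->
      Rabs ((g u1 * g u1 - g (u1 - s) * g (u1 - s)) - (g u2 * g u2 - g (u2 - s) * g (u2 - s)))
        <= M2 * s * Rabs (u1 - u2)).
Proof.
  intros hd hd2 hc2 hT.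
  set (w1 := fun x => 2 * g x * Derive g x).
  set (w2 := fun x => 2 * (Derive g x * Derive g x + g x * Derive (Derive g) x)).
  assert (hw : forall x, is_derive (fun y => g y * g y) x (w1 x))
    by (intro; apply is_derive_sq, hd).
  assert (hw1 : forall x, is_derive w1 x (w2 x)).
  { intro x. unfold w1, w2.
    assert (ex_derive g x) by (eexists; apply hd).
    assert (ex_derive (Derive g) x) by (eexists; apply hd2).
    auto_derive; auto.
    change (Derive (fun y => g y) x) with (Derive g x).
    change (Derive (fun y => Derive g y) x) with (Derive (Derive g) x). ring. }
  assert (hcont : forall f df : R -> R,
            (forall x, is_derive f x (df x)) -> forall x, continuous f x).
  { intros f df hf x. apply (@ex_derive_continuous R_AbsRing R_NormedModule). eexists; apply hf. }
  assert (hw2c : forall x, continuous w2 x).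
  { intro x. unfold w2.
    apply (@continuous_mult R_UniformSpace R_AbsRing (fun _ => 2)); [apply continuous_const|].
    apply (@continuous_plus R_UniformSpace R_AbsRing R_NormedModule);
      apply (@continuous_mult R_UniformSpace R_AbsRing); eauto. }
  destruct (C1_lipschitz_segment _ w1 0 T hT hw (hcont _ _ hw1)) as [M1 [hM1 hlip1]].
  destruct (C1_lipschitz_segment _ w2 0 T hT hw1 hw2c) as [M2 [hM2 hlip2]].
  exists M1, M2. repeat split; auto.
  exact (second_difference_lipschitz _ w1 T M2 hw hlip2).
Qed.

Definition Schur (v : R -> R) (s t : R) : R := v s - Gam v s t ^ 2 / v t.

Lemma Gam_eq v s t : 0 <= s <= t -> Gam v s t = (v s + v t - v (t - s)) / 2.
Proof. intros h. unfold Gam. rewrite !Rabs_pos_eq by lra. reflexivity. Qed.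

Lemma detSigma_Schur v s t : v t <> 0 -> detSigma v s t = v t * Schur v s t.
Proof. intros h. unfold detSigma, Schur. field. exact h. Qed.

Lemma detSigma_nonneg v s t : psd_kernel v -> v 0 = 0 -> 0 <= s -> 0 <= t -> 0 < v s ->
  0 <= detSigma v s t.
Proof.
  intros hpsd hv0 hs ht hvs.
  assert (hdiag : forall x, 0 <= x -> Gam v x x = v x).
  { intros x hx. unfold Gam. rewrite Rminus_diag, Rabs_R0, hv0, Rabs_pos_eq by lra. field. }
  assert (hsym : Gam v t s = Gam v s t).
  { unfold Gam. rewrite (Rabs_minus_sym s t). lra. }
  (* the form at a = (Gamma(s,t), - v s) equals v s * detSigma v s t *)
  pose proof (hpsd 1%nat (fun i => match i with O => s | _ => t end)
                (fun i => match i with O => Gam v s t | _ => - v s end)) as hq.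
  simpl in hq. rewrite hdiag, hdiag, hsym in hq by assumption.
  unfold detSigma. nra.
Qed.

Lemma Upsilon_eq v b c1 c2 s t : 0 < s < t -> 0 < v t -> 0 < Schur v s t ->
  Upsilon v b c1 c2 s t = Lc v b c2 t +
   (if Rlt_dec (c1 * s) (kfun v b c2 s t)
    then (kfun v b c2 s t - c1 * s) ^ 2 / (2 * Schur v s t) else 0).
Proof.
  intros hs hvt hS.
  unfold Upsilon, Lc.
  destruct (Rlt_dec (c1 * s) (kfun v b c2 s t)) as [_|_]; [|lra].
  assert (hdet : detSigma v s t <> 0) by (rewrite detSigma_Schur by lra; nra).
  unfold Lambda, kfun, Schur in *. unfold detSigma in hdet.
  rewrite (Gam_eq v (t - s) t), Gam_eq in * by lra.
  replace (t - (t - s)) with s by ring.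
  field. split; [lra|]. intro hzero. apply hdet. nra.
Qed.

Section LipschitzEstimates.

Variables (v : R -> R) (M1 M2 T : R).
Hypothesis v0 : v 0 = 0.
Hypothesis v_lip : forall x y, 0 <= x <= T -> 0 <= y <= T -> Rabs (v x - v y) <= M1 * Rabs (x - y).
Hypothesis v_diff2_lip : forall s u1 u2, 0 <= s -> s <= u1 <= T -> s <= u2 <= T ->
  Rabs ((v u1 - v (u1 - s)) - (v u2 - v (u2 - s))) <= M2 * s * Rabs (u1 - u2).

Lemma Gam_sub_le s t t' : 0 <= s <= t -> s <= t' -> t <= T -> t' <= T ->
  Rabs (Gam v s t - Gam v s t') <= M2 * s * Rabs (t - t') / 2.
Proof.
  intros hs ht' hT hT'. rewrite !Gam_eq by lra.
  replace ((v s + v t - v (t - s)) / 2 - (v s + v t' - v (t' - s)) / 2) with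
    (((v t - v (t - s)) - (v t' - v (t' - s))) / 2) by field.
  unfold Rdiv. rewrite Rabs_mult, (Rabs_pos_eq (/ 2)) by lra.
  apply Rmult_le_compat_r; [lra|]. apply v_diff2_lip; lra.
Qed.

Lemma Rabs_Gam_le s t : 0 <= s <= t -> t <= T -> Rabs (Gam v s t) <= M1 * s.
Proof.
  intros hs hT. rewrite Gam_eq by lra.
  pose proof (v_lip s 0 ltac:(lra) ltac:(lra)) as h1.
  pose proof (v_lip t (t - s) ltac:(lra) ltac:(lra)) as h2.
  rewrite v0, !Rminus_0_r in h1. replace (t - (t - s)) with s in h2 by ring.
  rewrite (Rabs_pos_eq s) in h1, h2 by lra.
  replace ((v s + v t - v (t - s)) / 2) with (v s / 2 + (v t - v (t - s)) / 2) by field.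
  eapply Rle_trans; [apply Rabs_triang|].
  unfold Rdiv. rewrite !Rabs_mult, (Rabs_pos_eq (/ 2)) by lra. lra.
Qed.

Lemma kfun_sub_le b c2 m s t t' : 0 <= b -> 0 <= c2 -> 0 < m ->
  0 <= s <= t -> s <= t' -> t <= T -> t' <= T -> m <= v t -> m <= v t' ->
  Rabs (kfun v b c2 s t - kfun v b c2 s t') <=
    ((M2 / 2 * (b + c2 * T) + M1 * c2) / m + M1 * M1 * (b + c2 * T) / (m * m))
      * s * Rabs (t - t').
Proof.
  intros hb hc2 hm hs ht' hT hT' hmt hmt'.
  assert (hGd := Gam_sub_le s t t' hs ht' hT hT').
  set (Y := b + c2 * T). set (dt := Rabs (t - t')) in *.
  assert (hdt : 0 <= dt) by apply Rabs_pos.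
  assert (hy : forall u, 0 <= u <= T -> Rabs (b + c2 * u) <= Y).
  { intros u hu. rewrite Rabs_pos_eq by nra. unfold Y. nra. }
  assert (hG' := Rabs_Gam_le s t' ltac:(lra) hT').
  assert (hyd : Rabs ((b + c2 * t) - (b + c2 * t')) = c2 * dt).
  { replace ((b + c2 * t) - (b + c2 * t')) with (c2 * (t - t')) by ring.
    rewrite Rabs_mult, Rabs_pos_eq by lra. reflexivity. }
  assert (hnum : Rabs (Gam v s t * (b + c2 * t) - Gam v s t' * (b + c2 * t'))
                   <= (M2 / 2 * Y + M1 * c2) * s * dt).
  { eapply Rle_trans; [apply Rabs_mul_sub_le|]. rewrite hyd.
    pose proof (hy t ltac:(lra)). pose proof (Rabs_pos (b + c2 * t)).
    pose proof (Rabs_pos (Gam v s t - Gam v s t')).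
    assert (Rabs (Gam v s t - Gam v s t') * Rabs (b + c2 * t) <= M2 * s * dt / 2 * Y)
      by (apply Rmult_le_compat; lra).
    assert (Rabs (Gam v s t') * (c2 * dt) <= M1 * s * (c2 * dt))
      by (apply Rmult_le_compat_r; nra).
    nra. }
  assert (ha' : Rabs (Gam v s t' * (b + c2 * t')) <= M1 * s * Y).
  { rewrite Rabs_mult. apply Rmult_le_compat; try apply Rabs_pos; auto. apply hy. lra. }
  unfold kfun.
  replace (Gam v s t / v t * (b + c2 * t) - Gam v s t' / v t' * (b + c2 * t')) with
    (Gam v s t * (b + c2 * t) / v t - Gam v s t' * (b + c2 * t') / v t') by (field; lra).
  pose proof (v_lip t t' ltac:(lra) ltac:(lra)) as hv.
  eapply Rle_trans; [exact (Rabs_div_sub_le _ _ _ _ m _ _ _ hm hmt hmt' hnum ha' hv)|].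
  right. unfold dt. field. lra.
Qed.

Lemma Schur_sub_le m s t t' : 0 < m ->
  0 <= s <= t -> s <= t' -> t <= T -> t' <= T -> m <= v t -> m <= v t' ->
  Rabs (Schur v s t - Schur v s t') <=
    (M2 * M1 / m + M1 * M1 * M1 / (m * m)) * s ^ 2 * Rabs (t - t').
Proof.
  intros hm hs ht' hT hT' hmt hmt'.
  assert (hGd := Gam_sub_le s t t' hs ht' hT hT').
  set (dt := Rabs (t - t')) in *.
  assert (hdt : 0 <= dt) by apply Rabs_pos.
  assert (hG := Rabs_Gam_le s t hs hT).
  assert (hG' := Rabs_Gam_le s t' ltac:(lra) hT').
  assert (hnum : Rabs (Gam v s t ^ 2 - Gam v s t' ^ 2) <= M2 * s * dt / 2 * (2 * (M1 * s))).
  { replace (Gam v s t ^ 2 - Gam v s t' ^ 2) with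
      ((Gam v s t - Gam v s t') * (Gam v s t + Gam v s t')) by ring.
    rewrite Rabs_mult. apply Rmult_le_compat; try apply Rabs_pos; auto.
    eapply Rle_trans; [apply Rabs_triang|lra]. }
  assert (hsq : Rabs (Gam v s t' ^ 2) <= M1 * s * (M1 * s)).
  { rewrite <- RPow_abs. simpl. rewrite Rmult_1_r.
    apply Rmult_le_compat; try apply Rabs_pos; auto. }
  unfold Schur.
  replace (v s - Gam v s t ^ 2 / v t - (v s - Gam v s t' ^ 2 / v t')) with
    (- (Gam v s t ^ 2 / v t - Gam v s t' ^ 2 / v t')) by ring.
  rewrite Rabs_Ropp.
  pose proof (v_lip t t' ltac:(lra) ltac:(lra)) as hv.
  eapply Rle_trans; [exact (Rabs_div_sub_le _ _ _ _ m _ _ _ hm hmt hmt' hnum hsq hv)|].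
  right. unfold dt. field. lra.
Qed.

End LipschitzEstimates.

Lemma sq_div_le_of_Schur_bounds u S S0 s h d K1 K3 : 0 < d -> 0 < s ->
  d * s ^ 2 <= S0 -> Rabs (S - S0) <= K3 * s ^ 2 * Rabs h -> K3 * Rabs h <= d / 2 ->
  0 <= u <= K1 * s * Rabs h -> u ^ 2 / (2 * S) <= K1 * K1 / d * h ^ 2.
Proof.
  intros hd hs hS0 hSS0 hK3 hu.
  assert (hs2 : 0 < s ^ 2) by (apply pow_lt; lra).
  assert (hS : d * s ^ 2 <= 2 * S).
  { apply Rabs_le_between in hSS0 as [hSS0 _].
    assert (K3 * s ^ 2 * Rabs h <= d / 2 * s ^ 2) by (rewrite Rmult_comm, <- Rmult_assoc; nra).
    lra. }
  apply Rle_trans with (u ^ 2 / (d * s ^ 2)).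
  - unfold Rdiv. apply Rmult_le_compat_l; [nra|]. apply Rinv_le_contravar; nra.
  - apply Rle_div_l; [nra|].
    replace (K1 * K1 / d * h ^ 2 * (d * s ^ 2)) with ((K1 * s * Rabs h) ^ 2)
      by (rewrite <- (pow2_abs h); field; lra).
    apply pow_incr. exact hu.
Qed.

Lemma kfun_le_affine v b c2 s t : 0 < b -> 0 < c2 -> 0 < s < t -> 0 < v t -> v s <= v t ->
  0 < Schur v s t -> kfun v b c2 s t <= b + c2 * t.
Proof.
  intros hb hc2 hs hvt hvs hS.
  assert (hG : Gam v s t <= v t).
  { unfold Schur in hS. assert (hsq : Gam v s t ^ 2 / v t < v t) by lra.
    apply Rlt_div_l in hsq; [|lra]. nra. }
  unfold kfun. replace (b + c2 * t) with (v t / v t * (b + c2 * t)) at 2 by (field; lra).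
  apply Rmult_le_compat_r; [nra|]. unfold Rdiv.
  apply Rmult_le_compat_r; [left; apply Rinv_0_lt_compat|]; lra.
Qed.

Section Perturbation.

Variables (v : R -> R) (b c1 c2 ts : R).
Hypothesis v0 : v 0 = 0.
Hypothesis v_pos : forall x, 0 < x -> 0 < v x.
Hypothesis v_le : forall x y, 0 <= x <= y -> v x <= v y.
Hypothesis Schur_pos : forall s t, 0 < s < t -> 0 < Schur v s t.
Hypothesis v_lipschitz : forall T, 0 <= T -> exists M1 M2, 0 <= M1 /\ 0 <= M2 /\
  (forall x y, 0 <= x <= T -> 0 <= y <= T -> Rabs (v x - v y) <= M1 * Rabs (x - y)) /\
  (forall s u1 u2, 0 <= s -> s <= u1 <= T -> s <= u2 <= T ->
     Rabs ((v u1 - v (u1 - s)) - (v u2 - v (u2 - s))) <= M2 * s * Rabs (u1 - u2)).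
Hypothesis Schur_quadratic_lower : forall smax, 0 < smax < ts ->
  exists d, 0 < d /\ forall s, 0 < s <= smax -> d * s ^ 2 <= Schur v s ts.
Hypotheses (hb : 0 < b) (hc2 : 0 < c2) (hc12 : c2 < c1) (ts_gt : b / (c1 - c2) < ts).
Hypothesis inactive : forall s, 0 < s < ts -> kfun v b c2 s ts <= c1 * s.

Lemma perturbation_window : exists r0 smax, 0 < r0 <= 1 /\ 0 < smax < ts - r0 /\
  c1 * smax = b + c2 * (ts + r0) /\ b / (c1 - c2) < ts - r0.
Proof.
  assert (hgap : 0 < (c1 - c2) * ts - b).
  { apply Rmult_lt_compat_l with (r := c1 - c2) in ts_gt; [|lra].
    replace ((c1 - c2) * (b / (c1 - c2))) with b in ts_gt by (field; lra). lra. }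
  set (r0 := Rmin 1 (((c1 - c2) * ts - b) / 2 / (c1 + c2))).
  assert (hr0 : 0 < r0).
  { unfold r0. apply Rmin_glb_lt; [lra|]. apply Rdiv_lt_0_compat; lra. }
  assert (hr0c : r0 * (c1 + c2) <= ((c1 - c2) * ts - b) / 2).
  { apply Rle_div_r; [lra|]. apply Rmin_r. }
  exists r0, ((b + c2 * (ts + r0)) / c1).
  assert (hsmax : c1 * ((b + c2 * (ts + r0)) / c1) = b + c2 * (ts + r0)) by (field; lra).
  assert (hts : 0 < ts) by nra.
  assert (hsmax_lt : (b + c2 * (ts + r0)) / c1 < ts - r0) by (apply Rmult_lt_reg_l with c1; lra).
  split; [split; [lra|apply Rmin_l]|].
  split; [split; [apply Rdiv_lt_0_compat; nra|exact hsmax_lt]|].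
  split; [exact hsmax|].
  apply Rmult_lt_reg_l with (c1 - c2); [lra|].
  replace ((c1 - c2) * (b / (c1 - c2))) with b by (field; lra). nra.
Qed.

Lemma kfun_Schur_lipschitz_near r0 : 0 < r0 <= 1 -> r0 < ts ->
  exists K1 K3, 0 <= K3 /\ forall s h, 0 < s < ts - r0 -> Rabs h < r0 ->
    Rabs (kfun v b c2 s (ts + h) - kfun v b c2 s ts) <= K1 * s * Rabs h /\
    Rabs (Schur v s (ts + h) - Schur v s ts) <= K3 * s ^ 2 * Rabs h.
Proof.
  intros hr0 hr0ts.
  destruct (v_lipschitz (ts + 1) ltac:(lra)) as [M1 [M2 [hM1 [hM2 [hlip hdiff2]]]]].
  set (m := v (ts - r0)).
  assert (hm : 0 < m) by (apply v_pos; lra).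
  exists ((M2 / 2 * (b + c2 * (ts + 1)) + M1 * c2) / m
          + M1 * M1 * (b + c2 * (ts + 1)) / (m * m)),
    (M2 * M1 / m + M1 * M1 * M1 / (m * m)).
  split.
  { assert (0 < m * m) by nra.
    apply Rplus_le_le_0_compat; apply Rmult_le_pos; try (left; apply Rinv_0_lt_compat); nra. }
  intros s h hs hh. apply Rabs_def2 in hh as [hh1 hh2].
  assert (hmt : m <= v (ts + h)) by (apply v_le; lra).
  assert (hmts : m <= v ts) by (apply v_le; lra).
  replace (Rabs h) with (Rabs (ts + h - ts)) by (f_equal; ring).
  split.
  - apply (kfun_sub_le v M1 M2 (ts + 1)); auto; lra.
  - apply (Schur_sub_le v M1 M2 (ts + 1)); auto; lra.
Qed.

Lemma supUpsilon_quadratic_bound : exists r K, 0 < r /\ 0 <= K /\ forall h, Rabs h < r ->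
  b / (c1 - c2) < ts + h /\
  Rbar_le (supUpsilon v b c1 c2 (ts + h)) (Lc v b c2 (ts + h) + K * h ^ 2).
Proof.
  destruct perturbation_window as [r0 [smax [hr0 [hsmax [hsmaxe ht0]]]]].
  destruct (Schur_quadratic_lower smax ltac:(lra)) as [d [hd hSd]].
  destruct (kfun_Schur_lipschitz_near r0 hr0 ltac:(lra)) as [K1 [K3 [hK3 hlip]]].
  exists (Rmin r0 (d / 2 / (K3 + 1))), (K1 * K1 / d).
  split; [apply Rmin_glb_lt; [lra|apply Rdiv_lt_0_compat; lra]|].
  assert (hK : 0 <= K1 * K1 / d) by (apply Rmult_le_pos; [nra|left; apply Rinv_0_lt_compat; lra]).
  split; [exact hK|].
  intros h hh.
  assert (hhr0 : Rabs h < r0) by (eapply Rlt_le_trans; [exact hh|apply Rmin_l]).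
  assert (hhK3 : Rabs h * (K3 + 1) <= d / 2).
  { apply Rle_div_r; [lra|]. left. eapply Rlt_le_trans; [exact hh|apply Rmin_r]. }
  pose proof (Rabs_def2 _ _ hhr0) as [hh1 hh2].
  split; [lra|].
  apply (proj2 (Lub_Rbar_correct _)). intros x [s [hs ->]]. simpl.
  rewrite Upsilon_eq by (auto; apply v_pos; lra).
  destruct (Rlt_dec (c1 * s) (kfun v b c2 s (ts + h))) as [hact|]; [|nra].
  apply Rplus_le_compat_l.
  (* an active s satisfies c1 s < k(s,t) <= b + c2 t < c1 smax *)
  assert (hs_small : s < smax).
  { pose proof (kfun_le_affine v b c2 s (ts + h) hb hc2 hs ltac:(apply v_pos; lra)
                  ltac:(apply v_le; lra) (Schur_pos s (ts + h) hs)). nra. }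
  destruct (hlip s h ltac:(lra) hhr0) as [hkd hSd'].
  apply (sq_div_le_of_Schur_bounds _ _ (Schur v s ts) s h d K1 K3); try nra.
  - apply hSd. lra.
  - pose proof (inactive s ltac:(lra)). apply Rabs_le_between in hkd. lra.
Qed.

End Perturbation.

Lemma sq_Schur_lower_alg s gs gt gts a be e D0 : 0 < s -> 0 < gt -> 0 <= a -> 0 <= e ->
  s * a <= gs <= s * D0 -> 0 <= gts <= gt -> gt - gts <= s * be -> s * (D0 * D0) <= e * gt ->
  (a * a - (be + e / 2) ^ 2) * s ^ 2
    <= gs * gs - ((gs * gs + gt * gt - gts * gts) / 2) ^ 2 / (gt * gt).
Proof.
  intros hs hgt ha he hgs hgts hinc hD0.
  set (G := (gs * gs + gt * gt - gts * gts) / 2).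
  assert (hbe : 0 <= be) by nra.
  assert (hG0 : 0 <= G) by (unfold G; nra).
  assert (hG1 : G <= s * gt * (be + e / 2)).
  { unfold G.
    assert (gs * gs <= s * s * (D0 * D0)).
    { assert (0 <= gs) by nra. replace (s * s * (D0 * D0)) with ((s * D0) * (s * D0)) by ring.
      apply Rmult_le_compat; lra. }
    assert (s * (s * (D0 * D0)) <= s * (e * gt)) by (apply Rmult_le_compat_l; lra).
    assert (gt * gt - gts * gts <= 2 * gt * (s * be)) by nra. nra. }
  assert (hq : G ^ 2 / (gt * gt) <= (be + e / 2) ^ 2 * s ^ 2).
  { apply Rmult_le_reg_r with (gt * gt); [nra|].
    replace (G ^ 2 / (gt * gt) * (gt * gt)) with (G ^ 2) by (field; lra).
    assert (G * G <= (s * gt * (be + e / 2)) * (s * gt * (be + e / 2)))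
      by (apply Rmult_le_compat; lra).
    nra. }
  assert (a * a * s ^ 2 <= gs * gs) by (assert (0 <= s * a) by nra; nra).
  lra.
Qed.

Lemma continuous_ball_near (f : R -> R) x e : continuous f x -> 0 < e ->
  locally x (fun y => f x - e < f y < f x + e).
Proof.
  intros hc he.
  apply (filter_imp (fun y => ball (f x) e (f y))).
  - intros y hy. apply Rabs_lt_between'. exact hy.
  - exact (hc _ (locally_ball (f x) (mkposreal e he))).
Qed.

Section SqrtProfile.

Variable g : R -> R.
Hypothesis g_derive : forall x, is_derive g x (Derive g x).
Hypothesis g_derive2 : forall x, is_derive (Derive g) x (Derive (Derive g) x).
Hypothesis g_C2 : forall x, continuous (Derive (Derive g)) x.
Hypothesis g_concave : strictly_concave_Rge0 g.
Hypothesis g_incr : forall x y, 0 <= x -> x < y -> g x < g y.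
Hypothesis g0 : g 0 = 0.

Lemma Derive_near_endpoints t e : 0 < e ->
  locally 0 (fun s => Derive g 0 - e < Derive g s < Derive g 0 + e /\
                      Derive g t - e < Derive g (t - s) < Derive g t + e).
Proof.
  intros he.
  assert (hcD : forall x, continuous (Derive g) x).
  { intro x. apply (@ex_derive_continuous R_AbsRing R_NormedModule). eexists; apply g_derive2. }
  apply filter_and; [exact (continuous_ball_near _ 0 e (hcD 0) he)|].
  assert (hc : continuous (fun s => Derive g (t - s)) 0).
  { apply (continuous_comp (fun s => t - s) (Derive g)); [|rewrite Rminus_0_r; apply hcD].
    apply (continuous_minus (fun _ => t) (fun s => s));
      [apply continuous_const|apply continuous_id]. }
  pose proof (continuous_ball_near _ 0 e hc he) as hball.
  cbv beta in hball. rewrite Rminus_0_r in hball. exact hball.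
Qed.

(* Near 0, g s ~ s g'(0) and Gamma(s,t) ~ s g(t) g'(t), so the Schur complement is
   ~ s^2 (g'(0)^2 - g'(t)^2), which is positive because g' is strictly decreasing. *)
Lemma sq_Schur_lower_near0 t smax : 0 < t -> 0 < smax ->
  exists sig d, 0 < sig <= smax /\ 0 < d /\ forall s, 0 < s <= sig ->
    d * s ^ 2 <= g s * g s -
      ((g s * g s + g t * g t - g (t - s) * g (t - s)) / 2) ^ 2 / (g t * g t).
Proof.
  intros ht hsmax.
  pose proof (concave_derive_decr g _ g_derive g_concave 0 t ltac:(lra) ht) as hdecr.
  set (D0 := Derive g 0) in *. set (Dt := Derive g t) in *. set (e := (D0 - Dt) / 4).
  assert (hDt : 0 < Dt) by (apply (concave_derive_pos g); auto; lra).
  assert (he : 0 < e) by (unfold e; lra).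
  assert (hgt : 0 < g t) by (rewrite <- g0; apply g_incr; lra).
  destruct (Derive_near_endpoints t e he) as [eps heps]. fold D0 Dt in heps.
  set (sig := Rmin smax (Rmin (eps / 2) (Rmin (t / 2) (e * g t / (D0 * D0 + 1))))).
  assert (hsig : 0 < sig).
  { unfold sig. pose proof (cond_pos eps).
    repeat apply Rmin_glb_lt; try lra. apply Rdiv_lt_0_compat; nra. }
  assert (hsig_eps : sig < eps)
    by (unfold sig; pose proof (cond_pos eps); eapply Rle_lt_trans; [apply Rmin_r|];
        eapply Rle_lt_trans; [apply Rmin_l|lra]).
  assert (hsig_t : sig <= t / 2)
    by (unfold sig; do 2 (eapply Rle_trans; [apply Rmin_r|]); apply Rmin_l).
  assert (hsig_e : sig * (D0 * D0 + 1) <= e * g t).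
  { apply Rle_div_r; [nra|]. unfold sig. do 3 (eapply Rle_trans; [apply Rmin_r|]). lra. }
  exists sig, ((D0 - e) * (D0 - e) - (Dt + e + e / 2) ^ 2).
  split; [split; [exact hsig|apply Rmin_l]|]. split; [unfold e in *; nra|].
  intros s hs.
  destruct (heps s) as [[hDs _] [_ hDts]].
  { apply Rabs_lt_between'. pose proof (cond_pos eps). lra. }
  assert (ha : 0 <= D0 - e) by (unfold e; lra).
  assert (hsD0 : s * (D0 * D0) <= e * g t) by nra.
  pose proof (concave_increment_bounds g _ g_derive g_concave 0 s ltac:(lra) ltac:(lra)) as hg_s.
  pose proof (concave_increment_bounds g _ g_derive g_concave (t - s) s ltac:(lra) ltac:(lra))
    as hg_t.
  rewrite Rplus_0_l, g0, Rminus_0_r in hg_s. change (Derive g 0) with D0 in hg_s.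
  replace (t - s + s) with t in hg_t by ring.
  assert (s * (D0 - e) <= s * Derive g s) by (apply Rmult_le_compat_l; lra).
  assert (s * Derive g (t - s) <= s * (Dt + e)) by (apply Rmult_le_compat_l; lra).
  assert (0 < g (t - s) < g t) by (rewrite <- g0; split; apply g_incr; lra).
  apply (sq_Schur_lower_alg s _ _ _ _ _ e D0); lra.
Qed.

Variable v : R -> R.
Hypothesis v_sq : forall x, 0 <= x -> v x = g x * g x.

Lemma sq_pos x : 0 < x -> 0 < v x.
Proof.
  intros hx. rewrite v_sq by lra.
  assert (0 < g x) by (rewrite <- g0; apply g_incr; lra). nra.
Qed.

Lemma sq_le x y : 0 <= x <= y -> v x <= v y.
Proof.
  intros hxy. rewrite !v_sq by lra.
  destruct (Req_dec x y) as [->|hne]; [lra|].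
  assert (g x < g y) by (apply g_incr; lra).
  assert (0 <= g x)
    by (rewrite <- g0; destruct (Req_dec x 0) as [->|]; [lra|left; apply g_incr; lra]).
  nra.
Qed.

Lemma sq_lipschitz T : 0 <= T -> exists M1 M2, 0 <= M1 /\ 0 <= M2 /\
  (forall x y, 0 <= x <= T -> 0 <= y <= T -> Rabs (v x - v y) <= M1 * Rabs (x - y)) /\
  (forall s u1 u2, 0 <= s -> s <= u1 <= T -> s <= u2 <= T ->
     Rabs ((v u1 - v (u1 - s)) - (v u2 - v (u2 - s))) <= M2 * s * Rabs (u1 - u2)).
Proof.
  intros hT.
  destruct (sq_C2_lipschitz_bounds g T g_derive g_derive2 g_C2 hT)
    as [M1 [M2 [hM1 [hM2 [hlip hdiff2]]]]].
  exists M1, M2. split; [exact hM1|]. split; [exact hM2|]. split.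
  - intros x y hx hy. rewrite !v_sq by lra. auto.
  - intros s u1 u2 hs hu1 hu2. rewrite !v_sq by lra. auto.
Qed.

Lemma sq_Schur_eq s t : 0 < s < t -> Schur v s t =
  g s * g s - ((g s * g s + g t * g t - g (t - s) * g (t - s)) / 2) ^ 2 / (g t * g t).
Proof. intros hs. unfold Schur. rewrite Gam_eq, !v_sq by lra. reflexivity. Qed.

Hypothesis Schur_pos : forall s t, 0 < s < t -> 0 < Schur v s t.

Lemma sq_Schur_quadratic_lower ts smax : 0 < smax < ts ->
  exists d, 0 < d /\ forall s, 0 < s <= smax -> d * s ^ 2 <= Schur v s ts.
Proof.
  intros hsmax.
  destruct (sq_Schur_lower_near0 ts smax ltac:(lra) ltac:(lra)) as [sig [d1 [hsig [hd1 hnear]]]].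
  set (Sg := fun s => g s * g s -
    ((g s * g s + g ts * g ts - g (ts - s) * g (ts - s)) / 2) ^ 2 / (g ts * g ts)).
  assert (hgts : 0 < g ts) by (rewrite <- g0; apply g_incr; lra).
  destruct (continuity_ab_min Sg sig smax ltac:(lra)) as [sm [hmin hsm]].
  { intros x _. apply continuity_pt_filterlim, (@ex_derive_continuous R_AbsRing R_NormedModule).
    unfold Sg. auto_derive; repeat split; try (eexists; apply g_derive); nra. }
  assert (hSm : 0 < Sg sm) by (unfold Sg; rewrite <- sq_Schur_eq by lra; apply Schur_pos; lra).
  exists (Rmin d1 (Sg sm / (smax * smax))).
  split; [apply Rmin_glb_lt; [lra|apply Rdiv_lt_0_compat; nra]|].
  intros s hs. rewrite sq_Schur_eq by lra.
  destruct (Rle_or_lt s sig) as [hsmall|hlarge].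
  - eapply Rle_trans; [|apply hnear; lra]. apply Rmult_le_compat_r; [nra|apply Rmin_l].
  - fold (Sg s). eapply Rle_trans; [|apply (hmin s); lra].
    apply Rle_trans with (Sg sm / (smax * smax) * s ^ 2).
    { apply Rmult_le_compat_r; [nra|apply Rmin_r]. }
    apply Rmult_le_reg_r with (smax * smax); [nra|].
    replace (Sg sm / (smax * smax) * s ^ 2 * (smax * smax)) with (Sg sm * (s * s)) by (field; lra).
    assert (s * s <= smax * smax) by (apply Rmult_le_compat; lra). nra.
Qed.

End SqrtProfile.

Lemma Schur_pos_of_psd v : psd_kernel v -> v 0 = 0 -> (forall x, 0 < x -> 0 < v x) ->
  (forall s t, 0 < s < t -> detSigma v s t <> 0) ->
  forall s t, 0 < s < t -> 0 < Schur v s t.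
Proof.
  intros hpsd hv0 hvpos hdet s t hs.
  pose proof (detSigma_nonneg v s t hpsd hv0 ltac:(lra) ltac:(lra) (hvpos s ltac:(lra))).
  pose proof (hdet s t hs). pose proof (hvpos t ltac:(lra)).
  rewrite detSigma_Schur in * by lra. nra.
Qed.

Lemma Upsilon_inactive v b c1 c2 s t : kfun v b c2 s t <= c1 * s ->
  Upsilon v b c1 c2 s t = Lc v b c2 t.
Proof.
  intros h. unfold Upsilon, Lc.
  destruct (Rlt_dec (c1 * s) (kfun v b c2 s t)); [lra|reflexivity].
Qed.

Lemma inactive_of_maximizer v b c1 c2 t smax : (forall x, 0 < x -> 0 < v x) ->
  (forall s t, 0 < s < t -> 0 < Schur v s t) ->
  kfun v b c2 smax t <= c1 * smax ->
  (forall s, 0 < s < t -> Upsilon v b c1 c2 s t <= Upsilon v b c1 c2 smax t) ->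
  forall s, 0 < s < t -> kfun v b c2 s t <= c1 * s.
Proof.
  intros hvpos hSchur hinact hmax s hs. apply Rnot_lt_le. intro hact.
  pose proof (hmax s hs) as hle.
  rewrite (Upsilon_inactive v b c1 c2 smax t hinact) in hle.
  rewrite Upsilon_eq in hle by (auto; apply hvpos; lra).
  destruct (Rlt_dec (c1 * s) (kfun v b c2 s t)) as [_|]; [|lra].
  pose proof (hSchur s t hs).
  assert (0 < (kfun v b c2 s t - c1 * s) ^ 2 / (2 * Schur v s t))
    by (apply Rdiv_lt_0_compat; [apply pow_lt|]; lra).
  lra.
Qed.

Lemma Upsilon_le_supUpsilon v b c1 c2 s t : 0 < s < t ->
  Rbar_le (Upsilon v b c1 c2 s t) (supUpsilon v b c1 c2 t).
Proof.
  intros hs. apply (proj1 (Lub_Rbar_correct _)). exists s. split; auto.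
Qed.

Lemma c1F_witness v b (c1 : R) c2 tF : Rbar_lt c1 (c1F v b c2 tF) ->
  exists s, 0 < s < tF /\ c1 * s < kfun v b c2 s tF.
Proof.
  intros hlt.
  destruct (Classical_Prop.classic (exists s, 0 < s < tF /\ c1 * s < kfun v b c2 s tF))
    as [hex|hnone]; [exact hex|exfalso].
  assert (hub : is_ub_Rbar (fun x => exists s, 0 < s < tF /\ x = kfun v b c2 s tF / s) c1).
  { intros x [s [hs ->]]. simpl. apply Rnot_lt_le. intro hlt'. apply hnone. exists s.
    split; [exact hs|]. apply Rmult_lt_compat_r with (r := s) in hlt'; [|lra].
    replace (kfun v b c2 s tF / s * s) with (kfun v b c2 s tF) in hlt' by (field; lra). lra. }
  pose proof (Rbar_lt_le_trans _ _ _ hlt (proj2 (Lub_Rbar_correct _) _ hub)) as hcontra.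
  simpl in hcontra. lra.
Qed.

Lemma assumptionA_sqrt v : (forall t, 0 <= t -> 0 <= v t) -> v 0 = 0 -> assumptionA v ->
  exists g, (forall x, is_derive g x (Derive g x)) /\
    (forall x, is_derive (Derive g) x (Derive (Derive g) x)) /\
    (forall x, continuous (Derive (Derive g)) x) /\ strictly_concave_Rge0 g /\
    (forall x y, 0 <= x -> x < y -> g x < g y) /\ g 0 = 0 /\
    (forall x, 0 <= x -> v x = g x * g x).
Proof.
  intros hvnn hv0 [[g [hgv [hgd1 [hgd2 hgc]]]] [hinc hconc]].
  exists g. refine (conj _ (conj _ (conj _ (conj _ (conj _ (conj _ _)))))).
  - intro x. apply Derive_correct, hgd1.
  - intro x. apply Derive_correct, hgd2.
  - exact hgc.
  - intros x y l hx hy hxy hl. rewrite !hgv by nra. apply hconc; auto.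
  - intros x y hx hxy. rewrite !hgv by lra. apply hinc; auto.
  - rewrite hgv, hv0, sqrt_0; lra.
  - intros x hx. rewrite hgv, sqrt_sqrt; auto.
Qed.

Theorem lemma3p9 (v : R -> R) (b c1 c2 : R)
  (hv_nonneg : forall t, 0 <= t -> 0 <= v t)
  (hv_cont : forall t, 0 <= t ->
     filterlim v (within (fun y => 0 <= y) (locally t)) (locally (v t)))
  (hv0 : v 0 = 0)
  (hv_growth : exists alpha, alpha < 2 /\
     is_lim (fun t => v t / Rpower t alpha) p_infty 0)
  (hv_gauss : psd_kernel v)
  (hSigma : forall s t, 0 < s < t -> detSigma v s t <> 0)
  (hb : 0 < b) (hc2 : 0 < c2) (hc12 : c2 < c1)
  (hA : assumptionA v)
  (tF : R) (htF : 0 < tF) (htFmin : forall t, 0 < t -> Lc v b c2 tF <= Lc v b c2 t)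
  (hc1F : Rbar_lt c1 (c1F v b c2 tF))
  (tstar : R) (htstar : b / (c1 - c2) < tstar)
  (htstar_min : forall t, b / (c1 - c2) < t ->
     Rbar_le (supUpsilon v b c1 c2 tstar) (supUpsilon v b c1 c2 t))
  (sstar : R) (hsstar : 0 < sstar < tstar)
  (hsstar_max : forall s, 0 < s < tstar ->
     Upsilon v b c1 c2 s tstar <= Upsilon v b c1 c2 sstar tstar) :
  c1 * sstar <= kfun v b c2 sstar tstar.
Proof.
  destruct (assumptionA_sqrt v hv_nonneg hv0 hA)
    as [g [hg1 [hg2 [hgC2 [hgconc [hginc [hg0 hvg]]]]]]].
  pose proof (sq_pos g hginc hg0 v hvg) as hvpos.
  pose proof (Schur_pos_of_psd v hv_gauss hv0 hvpos hSigma) as hSchur.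
  assert (ht0 : 0 < b / (c1 - c2)) by (apply Rdiv_lt_0_compat; lra).
  assert (hLg : forall t, 0 < t -> Lc v b c2 t = Lg g b c2 t)
    by (intros t ht; unfold Lc, Lg; rewrite hvg by lra; reflexivity).
  apply Rnot_lt_le. intro hsstar_inactive. apply Rlt_le in hsstar_inactive.
  pose proof (inactive_of_maximizer v b c1 c2 tstar sstar hvpos hSchur hsstar_inactive
                hsstar_max) as hinactive.
  destruct (supUpsilon_quadratic_bound v b c1 c2 tstar hv0 hvpos (sq_le g hginc hg0 v hvg)
              hSchur
              (sq_lipschitz g hg1 hg2 hgC2 v hvg)
              (sq_Schur_quadratic_lower g hg1 hg2 hgconc hginc hg0 v hvg hSchur tstar)
              hb hc2 hc12 htstar hinactive) as [r [K [hr [hK hbound]]]].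
  assert (hmin_tstar : quadratic_local_min (Lg g b c2) tstar).
  { exists r, K. split; [exact hr|]. split; [exact hK|]. intros h hh.
    destruct (hbound h hh) as [ht hle].
    pose proof (Rbar_le_trans _ _ _ (Upsilon_le_supUpsilon v b c1 c2 sstar tstar hsstar)
                  (Rbar_le_trans _ _ _ (htstar_min _ ht) hle)) as hchain.
    simpl in hchain. rewrite Upsilon_inactive, !hLg in hchain by lra. exact hchain. }
  assert (hmin_tF : quadratic_local_min (Lg g b c2) tF).
  { exists tF, 0. split; [exact htF|]. split; [lra|]. intros h hh.
    apply Rabs_def2 in hh. rewrite <- !hLg by lra.
    pose proof (htFmin (tF + h) ltac:(lra)). lra. }
  pose proof (Lg_quadratic_local_min_unique g _ hg1 hgconc hginc hg0 b c2 tstar tF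
                hb hc2 ltac:(lra) htF hmin_tstar hmin_tF) as htF_eq.
  subst tF.
  destruct (c1F_witness v b c1 c2 tstar hc1F) as [s [hs hactive]].
  pose proof (hinactive s hs). lra.
Qed.
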